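(* In the linear setting of the context, for all $\lambda>0$, $\sigma\in(0,1)$ and $\theta\ge0$, there exists $\tau>0$ such that for all initial conditions $x(0)\in\mathbb{R}^n$ the execution times generated by the dynamic event generator satisfy $t_{i+1}-t_i\ge\tau$ for all $i\in\mathbb I$. Moreover $x(t)\to0$ and $\eta(t)\to0$ as $t\to\infty$. If in addition $\lambda=(1-\sigma)\kappa$, then for all $t\ge0$, $V(x(t))\le V(x(0))e^{(\sigma-1)\kappa t}$.
   Context: Consider $\dot x=Ax+Bu$, $x\in\mathbb{R}^n$, $u\in\mathbb{R}^m$, and a gain $K$ such that $A+BK$ is Hurwitz; let $P,Q$ be symmetric positive definite with $(A+BK)^\top P+P(A+BK)=-Q$, $V(x)=x^\top Px$, and let $\kappa>0$ be such that $Q\ge\kappa P$. The input is $u(t)=Kx(t_i)$ for $t\in[t_i,t_{i+1})$, with $e(t)=x(t_i)-x(t)$, so $\dot x=Ax+BK(x+e)$. If infinitely many executions, $\mathbb I=\mathbb N$; otherwise $\mathbb I=\{0,\dots,I\}$. $g(t^-)$ is the left limit. Dynamic event generator with parameters $\sigma\in(0,1)$, $\lambda>0$, $\theta\ge0$: $\dot\eta=-\lambda\eta+\sigma x^\top Qx-2x^\top PBKe$, $\eta(0)=0$; $t_0=0$, $t_{i+1}=\inf\{t>t_i:\ \eta(t)+\theta(\sigma x(t)^\top Qx(t)-2x(t)^\top PBKe(t^-))\le0\}$. Assume $x(t_i)\ne0$ for all $i$. *)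

From Stdlib Require Import Reals Lra.
Open Scope R_scope.

(* Vectors of R^n are represented as functions nat -> R, of which only the
   entries with index < n are meaningful; matrices as nat -> nat -> R. *)
Definition vec := nat -> R.
Definition mat := nat -> nat -> R.

Fixpoint sumR (n : nat) (f : nat -> R) : R :=
  match n with
  | O => 0
  | S k => sumR k f + f k
  end.

Definition dot (n : nat) (u v : vec) : R := sumR n (fun k => u k * v k).
Definition mv (k : nat) (M : mat) (v : vec) : vec :=
  fun i => sumR k (fun j => M i j * v j).
Definition mm (k : nat) (M N : mat) : mat :=
  fun i j => sumR k (fun l => M i l * N l j).
Definition madd (M N : mat) : mat := fun i j => M i j + N i j.
Definition trans (M : mat) : mat := fun i j => M j i.
Definition vadd (u v : vec) : vec := fun k => u k + v k.
Definition vsub (u v : vec) : vec := fun k => u k - v k.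

Definition quad (n : nat) (M : mat) (v : vec) : R := dot n v (mv n M v).

Definition vnonzero (n : nat) (v : vec) : Prop := exists k, (k < n)%nat /\ v k <> 0.

Definition sym (n : nat) (M : mat) : Prop :=
  forall i j, (i < n)%nat -> (j < n)%nat -> M i j = M j i.

Definition pos_def (n : nat) (M : mat) : Prop :=
  forall v, vnonzero n v -> 0 < quad n M v.

(* Hurwitz: every (complex) eigenvalue a + i b of M has negative real part.
   A complex eigenvector u + i w is written in real coordinates:
   M (u + i w) = (a + i b)(u + i w). *)
Definition hurwitz (n : nat) (M : mat) : Prop :=
  forall (a b : R) (u w : vec),
    (exists k, (k < n)%nat /\ (u k <> 0 \/ w k <> 0)) ->
    (forall k, (k < n)%nat ->
        mv n M u k = a * u k - b * w k /\ mv n M w k = b * u k + a * w k) ->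
    a < 0.

(* Index set I: Ifin = None means infinitely many executions (I = N),
   Ifin = Some N means I = {0,...,N}. *)
Definition inI (Ifin : option nat) (i : nat) : Prop :=
  match Ifin with None => True | Some N => (i <= N)%nat end.

Definition is_glb (S : R -> Prop) (b : R) : Prop :=
  (forall s, S s -> b <= s) /\ (forall c, (forall s, S s -> c <= s) -> c <= b).

Definition vec_deriv (n : nat) (f : R -> vec) (t : R) (d : vec) : Prop :=
  forall k, (k < n)%nat -> derivable_pt_lim (fun s => f s k) t (d k).

(* The triggering function on the i-th inter-event interval, evaluated along the
   flow (z,zeta) with held input K x(t_i):
   eta(t) + theta (sigma x^T Q x - 2 x^T P B K e(t^-)),  e(t^-) = x(t_i) - x(t). *)
Definition trig (n m : nat) (P Q B K : mat) (sigma theta : R)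
    (xi : vec) (zt : vec) (et : R) : R :=
  et + theta * (sigma * quad n Q zt
                - 2 * dot n zt (mv n P (mv m B (mv n K (vsub xi zt))))).

(* (x, eta, t, Ifin) is a solution of the closed loop with the dynamic event
   generator.  z i and zeta i are the flows of the closed loop with input held
   at K x(t_i) (and eta-dynamics with e = x(t_i) - x), started at time t_i from
   (x(t_i), eta(t_i)); the solution follows them on [t_i, t_{i+1}]
   (on [t_i, oo) for the last index), and t_{i+1} is the infimum of the
   triggering set computed along these flows. *)
Definition is_execution (n m : nat) (A B K P Q : mat) (lam sigma theta : R)
    (x : R -> vec) (eta : R -> R) (t : nat -> R) (Ifin : option nat)
    (z : nat -> R -> vec) (zeta : nat -> R -> R) : Prop :=
  t 0%nat = 0 /\ eta 0 = 0 /\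
  (forall i, inI Ifin i ->
     z i (t i) = x (t i) /\ zeta i (t i) = eta (t i) /\
     (forall s, vec_deriv n (z i) s
                  (vadd (mv n A (z i s)) (mv m B (mv n K (x (t i)))))) /\
     (forall s, derivable_pt_lim (zeta i) s
                  (- lam * zeta i s + sigma * quad n Q (z i s)
                   - 2 * dot n (z i s)
                           (mv n P (mv m B (mv n K (vsub (x (t i)) (z i s)))))))) /\
  (forall i, inI Ifin i -> inI Ifin (S i) ->
     is_glb (fun s => t i < s /\
               trig n m P Q B K sigma theta (x (t i)) (z i s) (zeta i s) <= 0)
            (t (S i)) /\
     (forall s, t i <= s <= t (S i) -> x s = z i s /\ eta s = zeta i s)) /\
  (forall i, inI Ifin i -> ~ inI Ifin (S i) ->
     (forall s, t i < s ->
        ~ (trig n m P Q B K sigma theta (x (t i)) (z i s) (zeta i s) <= 0)) /\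
     (forall s, t i <= s -> x s = z i s /\ eta s = zeta i s)).

Definition tends_to_0 (f : R -> R) : Prop :=
  forall eps, 0 < eps -> exists T, forall s, T <= s -> Rabs (f s) < eps.

From Stdlib Require Import Reals Lra Lia Psatz Classical.
Open Scope R_scope.

(* Let W = V(x) + eta with V(x) = x^T P x.  Between two executions the state
   follows the closed loop with held input K x(t_i), and the Lyapunov equation
   gives W' = -(1 - sigma) x^T Q x - lam eta along it.
   1. Dwell time.  Along a held flow started at xi <> 0 the error e = xi - x
      grows at most like |xi|^2 (e^(al h) - 1), while the eta-input
      sigma x^T Q x - 2 x^T P B K e is at least a multiple of |xi|^2 minus a
      multiple of |e|^2 (coercivity of Q, Young's inequality).  Hence there is
      a uniform tau > 0 during which the eta-input is positive; then eta, and
      with it the triggering quantity, stays positive, so t_(i+1) - t_i >= tau.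
   2. Decay.  As long as the triggering quantity eta + theta (eta-input) is
      positive, eta stays nonnegative, so W' <= - c W for any
      c <= min((1 - sigma) kappa, lam) (Gronwall).  Chaining the intervals, which
      cover [0, oo) thanks to the dwell time, gives W(s) <= V(x(0)) e^(-c s).
   3. Convergence of x and eta follows from coercivity of P, and the rate
      c = lam = (1 - sigma) kappa gives the last claim.
   The file develops, in order: finite sums and Cauchy–Schwarz, norms and
   matrix bounds, coercivity of positive definite forms (Schur complements),
   one-variable differential inequalities, the closed-loop identities, the
   dwell time, the analysis of an execution, and the main theorem. *)

Lemma sumR_ext n f g : (forall k, (k < n)%nat -> f k = g k) -> sumR n f = sumR n g.
Proof.
induction n as [|n IH]; simpl; intros H; [reflexivity|].
rewrite IH by (intros; apply H; lia). rewrite H by lia. reflexivity.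
Qed.

Lemma sumR_plus n f g : sumR n (fun k => f k + g k) = sumR n f + sumR n g.
Proof. induction n; simpl; [lra|]. rewrite IHn; lra. Qed.

Lemma sumR_minus n f g : sumR n (fun k => f k - g k) = sumR n f - sumR n g.
Proof. induction n; simpl; [lra|]. rewrite IHn; lra. Qed.

Lemma sumR_scal n c f : sumR n (fun k => c * f k) = c * sumR n f.
Proof. induction n; simpl; [lra|]. rewrite IHn; lra. Qed.

Lemma sumR_zero n : sumR n (fun _ => 0) = 0.
Proof. induction n; simpl; [lra|]. rewrite IHn; lra. Qed.

Lemma sumR_swap n m f :
  sumR n (fun i => sumR m (fun j => f i j)) = sumR m (fun j => sumR n (fun i => f i j)).
Proof.
induction n; simpl; [rewrite sumR_zero; reflexivity|].
rewrite IHn, <- sumR_plus. reflexivity.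
Qed.

Lemma sumR_le n f g : (forall k, (k < n)%nat -> f k <= g k) -> sumR n f <= sumR n g.
Proof.
induction n as [|n IH]; simpl; intros H; [lra|].
assert (sumR n f <= sumR n g) by (apply IH; intros; apply H; lia).
assert (f n <= g n) by (apply H; lia). lra.
Qed.

Lemma sumR_nonneg n f : (forall k, (k < n)%nat -> 0 <= f k) -> 0 <= sumR n f.
Proof. intros H. rewrite <- (sumR_zero n). apply sumR_le; auto. Qed.

Lemma sumR_term n f k :
  (forall j, (j < n)%nat -> 0 <= f j) -> (k < n)%nat -> f k <= sumR n f.
Proof.
induction n as [|n IH]; simpl; intros H Hk; [lia|].
assert (0 <= sumR n f) by (apply sumR_nonneg; intros; apply H; lia).
destruct (Nat.eq_dec k n) as [->|Hne]; [lra|].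
assert (f k <= sumR n f) by (apply IH; [intros; apply H; lia | lia]).
assert (0 <= f n) by (apply H; lia). lra.
Qed.

Lemma sq_le_nonneg u v : 0 <= v -> u ^ 2 <= v ^ 2 -> u <= v.
Proof. intros Hv H. destruct (Rle_dec u v) as [|Hn]; [auto|nra]. Qed.

Lemma CS_step S A B x y : 0 <= A -> 0 <= B -> S ^ 2 <= A * B ->
  (S + x * y) ^ 2 <= (A + x ^ 2) * (B + y ^ 2).
Proof.
intros HA HB H.
assert (Hxy : S ^ 2 * (x ^ 2 * y ^ 2) <= A * B * (x ^ 2 * y ^ 2))
  by (apply Rmult_le_compat_r; nra).
assert (Hcross : 2 * S * x * y <= A * y ^ 2 + x ^ 2 * B).
{ apply sq_le_nonneg; [nra|]. pose proof (pow2_ge_0 (A * y ^ 2 - x ^ 2 * B)). nra. }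
nra.
Qed.

Lemma cauchy_schwarz n a b :
  (sumR n (fun k => a k * b k)) ^ 2
  <= sumR n (fun k => a k ^ 2) * sumR n (fun k => b k ^ 2).
Proof.
induction n; simpl; [lra|].
apply CS_step; auto; apply sumR_nonneg; intros; nra.
Qed.

(* Squared Euclidean norm on R^n. *)
Definition nrm (n : nat) (v : vec) : R := dot n v v.

Lemma mv_ext k M u v i : (forall j, (j < k)%nat -> u j = v j) -> mv k M u i = mv k M v i.
Proof. intros H; unfold mv; apply sumR_ext; intros j Hj; rewrite H; auto. Qed.

Lemma dot_ext n u v u' v' : (forall j, (j < n)%nat -> u j = u' j /\ v j = v' j) ->
  dot n u v = dot n u' v'.
Proof.
intros H; unfold dot; apply sumR_ext; intros j Hj; destruct (H j Hj) as [-> ->]; auto.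
Qed.

Lemma quad_ext n M u v : (forall j, (j < n)%nat -> u j = v j) -> quad n M u = quad n M v.
Proof.
intros H. unfold quad. apply dot_ext. intros j Hj. split; auto. apply mv_ext; auto.
Qed.

Lemma dot_comm n u v : dot n u v = dot n v u.
Proof. unfold dot; apply sumR_ext; intros; ring. Qed.

Lemma mv_lin k M u v a b i :
  mv k M (fun j => a * u j + b * v j) i = a * mv k M u i + b * mv k M v i.
Proof. unfold mv. rewrite <- !sumR_scal, <- sumR_plus. apply sumR_ext; intros; ring. Qed.

Lemma dot_lin2 n w u v a b :
  dot n w (fun j => a * u j + b * v j) = a * dot n w u + b * dot n w v.
Proof. unfold dot. rewrite <- !sumR_scal, <- sumR_plus. apply sumR_ext; intros; ring. Qed.

Lemma dot_sym_mv n P u w : sym n P -> dot n u (mv n P w) = dot n w (mv n P u).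
Proof.
intros HP. unfold dot, mv.
transitivity (sumR n (fun i => sumR n (fun j => u i * P i j * w j))).
{ apply sumR_ext; intros. rewrite <- sumR_scal. apply sumR_ext; intros; ring. }
rewrite sumR_swap. apply sumR_ext; intros j Hj. rewrite <- sumR_scal.
apply sumR_ext; intros i Hi. rewrite (HP i j) by auto. ring.
Qed.

Lemma mv_mm k k' M N v i : mv k (mm k' M N) v i = mv k' M (mv k N v) i.
Proof.
unfold mv, mm.
transitivity (sumR k (fun j => sumR k' (fun l => M i l * N l j * v j))).
{ apply sumR_ext; intros. rewrite (Rmult_comm _ (v k0)), <- sumR_scal.
  apply sumR_ext; intros; ring. }
rewrite sumR_swap. apply sumR_ext; intros l Hl. rewrite <- sumR_scal.
apply sumR_ext; intros; ring.
Qed.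

Lemma dot_trans n k v M w : dot n v (mv k (trans M) w) = dot k w (mv n M v).
Proof.
unfold dot, mv, trans.
transitivity (sumR n (fun i => sumR k (fun l => v i * M l i * w l))).
{ apply sumR_ext; intros. rewrite <- sumR_scal. apply sumR_ext; intros; ring. }
rewrite sumR_swap. apply sumR_ext; intros l Hl. rewrite <- sumR_scal.
apply sumR_ext; intros; ring.
Qed.

Lemma nrm_nonneg n v : 0 <= nrm n v.
Proof. unfold nrm, dot. apply sumR_nonneg; intros; nra. Qed.

Lemma nrm_term n v k : (k < n)%nat -> v k ^ 2 <= nrm n v.
Proof.
intros Hk. unfold nrm, dot.
assert (v k * v k <= sumR n (fun j => v j * v j))
  by (apply (sumR_term n (fun j => v j * v j)); auto; intros; nra).
nra.
Qed.

Lemma nrm_pos n v : vnonzero n v -> 0 < nrm n v.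
Proof. intros [k [Hk Hv]]. pose proof (nrm_term n v k Hk). nra. Qed.

Lemma nrm_opp n u : nrm n (fun k => - u k) = nrm n u.
Proof. unfold nrm, dot. apply sumR_ext; intros; ring. Qed.

Lemma nrm_zero n : nrm n (fun _ => 0) = 0.
Proof.
unfold nrm, dot. transitivity (sumR n (fun _ => 0)); [apply sumR_ext; intros; ring | apply sumR_zero].
Qed.

Lemma quad_zero n M : quad n M (fun _ => 0) = 0.
Proof.
unfold quad, dot. transitivity (sumR n (fun _ => 0)); [apply sumR_ext; intros; ring|].
apply sumR_zero.
Qed.

Lemma young n u w d : 0 < d -> 2 * dot n u w <= d * nrm n u + nrm n w / d.
Proof.
intros Hd. unfold nrm, dot, Rdiv.
rewrite <- sumR_scal, (Rmult_comm _ (/ d)), <- !sumR_scal, <- sumR_plus.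
apply sumR_le; intros j _.
assert (0 <= d * (u j - w j / d) ^ 2) by (apply Rmult_le_pos; [lra | apply pow2_ge_0]).
assert (d * (u j - w j / d) ^ 2
        = d * (u j * u j) + / d * (w j * w j) - 2 * (u j * w j)) by (field; lra).
lra.
Qed.

Lemma nrm_add n y u w : (forall j, (j < n)%nat -> y j = u j + w j) ->
  nrm n y <= 2 * nrm n u + 2 * nrm n w.
Proof.
intros H. unfold nrm, dot. rewrite <- !sumR_scal, <- sumR_plus.
apply sumR_le; intros j Hj. rewrite H by auto.
pose proof (pow2_ge_0 (u j - w j)). lra.
Qed.

Definition lin_bound (k l : nat) (f : vec -> vec) (C : R) : Prop :=
  0 <= C /\ forall v, nrm l (f v) <= C * nrm k v.

Lemma mv_bound k l M : exists C, lin_bound k l (mv k M) C.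
Proof.
exists (sumR l (fun i => sumR k (fun j => M i j ^ 2))). split.
{ apply sumR_nonneg; intros; apply sumR_nonneg; intros; nra. }
intros v. unfold nrm at 1. unfold dot.
rewrite Rmult_comm, <- sumR_scal. apply sumR_le; intros i Hi.
pose proof (cauchy_schwarz k (fun j => M i j) v). unfold mv, nrm, dot.
replace (sumR k (fun j => v j * v j)) with (sumR k (fun j => v j ^ 2))
  by (apply sumR_ext; intros; ring).
nra.
Qed.

Lemma lin_bound_comp k l p f g Cf Cg :
  lin_bound k l f Cf -> lin_bound l p g Cg -> lin_bound k p (fun v => g (f v)) (Cg * Cf).
Proof.
intros [HCf Hf] [HCg Hg]. split; [apply Rmult_le_pos; auto|]. intros v.
pose proof (Hg (f v)). pose proof (Hf v).
assert (Cg * nrm l (f v) <= Cg * (Cf * nrm k v)) by (apply Rmult_le_compat_l; auto).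
lra.
Qed.

(** * Coercivity of positive definite quadratic forms *)

Lemma quad_S n P v : sym (S n) P ->
  quad (S n) P v = quad n P v + 2 * v n * mv n P v n + P n n * v n ^ 2.
Proof.
intros HP. unfold quad, dot. simpl.
assert (E : sumR n (fun i => v i * mv (S n) P v i)
            = sumR n (fun i => v i * mv n P v i) + v n * mv n P v n).
{ unfold mv. simpl.
  transitivity (sumR n (fun i => v i * sumR n (fun j => P i j * v j))
                + sumR n (fun i => v n * (P n i * v i))).
  - rewrite <- sumR_plus. apply sumR_ext; intros i Hi. rewrite (HP i n) by lia. ring.
  - rewrite sumR_scal. reflexivity. }
rewrite E. change (mv (S n) P v n) with (mv n P v n + P n n * v n). ring.
Qed.

Definition schur (n : nat) (P : mat) : mat := fun i j => P i j - P i n * P n j / P n n.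

Lemma schur_sym n P : sym (S n) P -> sym n (schur n P).
Proof.
intros HP i j Hi Hj. unfold schur.
rewrite (HP i j), (HP i n), (HP n j) by lia. unfold Rdiv. ring.
Qed.

Lemma quad_schur n P v : sym (S n) P -> 0 < P n n ->
  quad (S n) P v = quad n (schur n P) v + P n n * (v n + mv n P v n / P n n) ^ 2.
Proof.
intros HP Hp. rewrite quad_S by auto.
assert (E : quad n (schur n P) v = quad n P v - mv n P v n * mv n P v n / P n n).
{ unfold quad, dot, mv, schur.
  transitivity (sumR n (fun i => v i * sumR n (fun j => P i j * v j))
                - sumR n (fun i => (mv n P v n / P n n) * (P n i * v i))).
  2:{ rewrite sumR_scal. unfold mv. field. lra. }
  rewrite <- sumR_minus. apply sumR_ext; intros i Hi.
  assert (sumR n (fun j => (P i j - P i n * P n j / P n n) * v j)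
          = sumR n (fun j => P i j * v j) - (P i n / P n n) * sumR n (fun j => P n j * v j)).
  { rewrite <- sumR_scal, <- sumR_minus. apply sumR_ext; intros; unfold Rdiv; ring. }
  rewrite H, (HP n i) by lia. unfold mv, Rdiv. ring. }
rewrite E. field. lra.
Qed.

Lemma pos_def_diag n P : sym (S n) P -> pos_def (S n) P -> 0 < P n n.
Proof.
intros HP Hpd.
set (e := fun k => if Nat.eqb k n then 1 else 0).
assert (He : forall j, (j < n)%nat -> e j = 0).
{ intros j Hj. unfold e. destruct (Nat.eqb_spec j n); [lia | auto]. }
assert (Hen : e n = 1) by (unfold e; rewrite Nat.eqb_refl; reflexivity).
assert (Hnz : vnonzero (S n) e) by (exists n; split; [lia | lra]).
pose proof (Hpd e Hnz) as Hq. rewrite quad_S in Hq by auto.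
rewrite (quad_ext n P e (fun _ => 0)), quad_zero, (mv_ext n P e (fun _ => 0)) in Hq by auto.
unfold mv in Hq. rewrite (sumR_ext n _ (fun _ => 0)), sumR_zero, Hen in Hq by (intros; ring).
lra.
Qed.

Lemma schur_pos_def n P : sym (S n) P -> pos_def (S n) P -> pos_def n (schur n P).
Proof.
intros HP Hpd v' Hv'.
pose proof (pos_def_diag n P HP Hpd) as Hp.
(* extend v' by the last coordinate that kills the completed square *)
set (v := fun k => if Nat.eqb k n then - mv n P v' n / P n n else v' k).
assert (Hvv : forall j, (j < n)%nat -> v j = v' j).
{ intros j Hj. unfold v. destruct (Nat.eqb_spec j n); [lia | auto]. }
assert (Hnz : vnonzero (S n) v).
{ destruct Hv' as [k [Hk Hvk]]. exists k. split; [lia | rewrite Hvv; auto]. }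
pose proof (Hpd v Hnz) as Hq. rewrite quad_schur in Hq by auto.
rewrite (mv_ext n P v v'), (quad_ext n (schur n P) v v') in Hq by auto.
unfold v in Hq. rewrite Nat.eqb_refl in Hq.
replace (- mv n P v' n / P n n + mv n P v' n / P n n) with 0 in Hq by (field; lra).
lra.
Qed.

(* The arithmetic behind the inductive step of coercivity: with
   v_n = w - t and t^2 <= r |v'|^2, a constant mu that is small compared
   with the Schur bound mu' and the pivot p works in dimension n + 1. *)
Lemma coercive_step mu mu' p r N t w q :
  0 <= mu -> 0 <= N -> t ^ 2 <= r * N ->
  mu * (1 + 2 * r) <= mu' -> 2 * mu <= p -> mu' * N <= q ->
  mu * (N + (w - t) ^ 2) <= q + p * w ^ 2.
Proof.
intros Hmu HN Ht Hmu1 Hmu2 Hq.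
assert (Hsq : (w - t) ^ 2 <= 2 * w ^ 2 + 2 * t ^ 2) by (pose proof (pow2_ge_0 (w + t)); nra).
assert (mu * (w - t) ^ 2 <= mu * (2 * w ^ 2 + 2 * (r * N))) by (apply Rmult_le_compat_l; lra).
assert (mu * (1 + 2 * r) * N <= mu' * N) by (apply Rmult_le_compat_r; lra).
assert (2 * mu * w ^ 2 <= p * w ^ 2) by (apply Rmult_le_compat_r; [apply pow2_ge_0 | lra]).
lra.
Qed.

(* By induction on the dimension: the Schur complement is positive definite in
   one dimension less, and completing the square handles the last coordinate. *)
Lemma coercive n : forall P, sym n P -> pos_def n P ->
  exists mu, 0 < mu /\ forall v, mu * nrm n v <= quad n P v.
Proof.
induction n as [|n IH]; intros P HP Hpd.
{ exists 1. split; [lra|]. intros v. unfold nrm, quad, dot; simpl. lra. }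
set (p := P n n). assert (Hp : 0 < p) by (apply pos_def_diag; auto).
destruct (IH (schur n P) (schur_sym n P HP) (schur_pos_def n P HP Hpd)) as [mu' [Hmu' Hc]].
set (r := sumR n (fun j => P n j ^ 2) / (p * p)).
assert (Hr : 0 <= r).
{ apply Rmult_le_pos; [apply sumR_nonneg; intros; nra | apply Rlt_le, Rinv_0_lt_compat; nra]. }
set (mu := Rmin (mu' / (1 + 2 * r)) (p / 2)).
assert (Hmu0 : 0 < mu) by (apply Rmin_glb_lt; [apply Rdiv_lt_0_compat|]; lra).
assert (Hmu1 : mu * (1 + 2 * r) <= mu').
{ assert (mu <= mu' / (1 + 2 * r)) by apply Rmin_l.
  apply (Rmult_le_compat_r (1 + 2 * r)) in H; [|lra].
  replace (mu' / (1 + 2 * r) * (1 + 2 * r)) with mu' in H by (field; lra). lra. }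
assert (Hmu2 : 2 * mu <= p) by (assert (mu <= p / 2) by apply Rmin_r; lra).
exists mu. split; [auto|]. intros v.
set (s := mv n P v n).
assert (Hs : (s / p) ^ 2 <= r * nrm n v).
{ pose proof (cauchy_schwarz n (fun j => P n j) v) as H.
  replace (sumR n (fun j => v j ^ 2)) with (nrm n v) in H
    by (unfold nrm, dot; apply sumR_ext; intros; ring).
  unfold r, Rdiv. replace ((s * / p) ^ 2) with (s ^ 2 * / (p * p)) by (field; lra).
  rewrite Rmult_assoc, (Rmult_comm (/ (p * p))), <- Rmult_assoc.
  apply Rmult_le_compat_r; [apply Rlt_le, Rinv_0_lt_compat; nra | exact H]. }
replace (nrm (S n) v) with (nrm n v + (v n + s / p - s / p) ^ 2)
  by (unfold nrm, dot; simpl; ring).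
rewrite quad_schur by auto.
apply (coercive_step mu mu' p r); auto; [lra | apply nrm_nonneg].
Qed.

Lemma sumR_derive n (f : nat -> R -> R) (d : nat -> R) t :
  (forall k, (k < n)%nat -> derivable_pt_lim (f k) t (d k)) ->
  derivable_pt_lim (fun s => sumR n (fun k => f k s)) t (sumR n d).
Proof.
induction n as [|n IH]; simpl; intros H; [apply derivable_pt_lim_const|].
apply (derivable_pt_lim_plus (fun s => sumR n (fun k => f k s)) (f n)).
- apply IH; intros; apply H; lia.
- apply H; lia.
Qed.

Lemma mv_deriv k l M u s du : vec_deriv k u s du ->
  vec_deriv l (fun r => mv k M (u r)) s (mv k M du).
Proof.
intros H i _. unfold mv. apply (sumR_derive k (fun j r => M i j * u r j)).
intros j Hj. apply derivable_pt_lim_scal. apply H; auto.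
Qed.

Lemma dot_deriv n u w s du dw : vec_deriv n u s du -> vec_deriv n w s dw ->
  derivable_pt_lim (fun r => dot n (u r) (w r)) s (dot n du (w s) + dot n (u s) dw).
Proof.
intros Hu Hw. unfold dot. rewrite <- sumR_plus.
apply (sumR_derive n (fun j r => u r j * w r j)). intros j Hj.
apply (derivable_pt_lim_mult (fun r => u r j) (fun r => w r j)); auto.
Qed.

Lemma quad_deriv n P z s dz : sym n P -> vec_deriv n z s dz ->
  derivable_pt_lim (fun r => quad n P (z r)) s (2 * dot n (z s) (mv n P dz)).
Proof.
intros HP Hz. unfold quad.
replace (2 * dot n (z s) (mv n P dz))
  with (dot n dz (mv n P (z s)) + dot n (z s) (mv n P dz))
  by (rewrite (dot_sym_mv n P dz (z s)) by auto; ring).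
apply dot_deriv; auto. apply mv_deriv; auto.
Qed.

(** * Differential inequalities in one variable *)

Lemma exp_monotone a b : a <= b -> exp a <= exp b.
Proof.
intros H. destruct (Req_dec a b) as [->|]; [lra|]. apply Rlt_le, exp_increasing; lra.
Qed.

Lemma nonincreasing_of_deriv h h' a s : a <= s ->
  (forall r, a <= r <= s -> derivable_pt_lim h r (h' r)) ->
  (forall r, a < r < s -> h' r <= 0) -> h s <= h a.
Proof.
intros Has Hd Hn. destruct (Req_dec a s) as [<-|Hne]; [lra|].
destruct (MVT_cor2 h h' a s) as [c [Hc1 Hc2]]; [lra | auto |].
assert (h' c <= 0) by (apply Hn; lra). nra.
Qed.

Lemma increasing_of_deriv h h' a s : a < s ->
  (forall r, a <= r <= s -> derivable_pt_lim h r (h' r)) ->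
  (forall r, a < r < s -> 0 < h' r) -> h a < h s.
Proof.
intros Has Hd Hn.
destruct (MVT_cor2 h h' a s) as [c [Hc1 Hc2]]; [lra | auto |].
assert (0 < h' c) by (apply Hn; lra). nra.
Qed.

Lemma exp_weight_deriv f t l c a : derivable_pt_lim f t l ->
  derivable_pt_lim (fun r => f r * exp (c * (r - a))) t
                   ((l + c * f t) * exp (c * (t - a))).
Proof.
intros H.
assert (Hlin : derivable_pt_lim (fun r => c * (r - a)) t c).
{ pose proof (derivable_pt_lim_scal _ c t _
    (derivable_pt_lim_minus id (fun _ => a) t 1 0
       (derivable_pt_lim_id t) (derivable_pt_lim_const a t))) as H1.
  replace (c * (1 - 0)) with c in H1 by ring. exact H1. }
pose proof (derivable_pt_lim_comp _ exp t c _ Hlin (derivable_pt_lim_exp _)) as He.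
unfold comp in He.
replace ((l + c * f t) * exp (c * (t - a)))
  with (l * exp (c * (t - a)) + f t * (exp (c * (t - a)) * c)) by ring.
apply (derivable_pt_lim_mult f (fun r => exp (c * (r - a)))); auto.
Qed.

Lemma exp_weight_cancel y c d : y = y * exp (c * d) * exp (- c * d).
Proof.
rewrite Rmult_assoc, <- exp_plus. replace (c * d + - c * d) with 0 by ring.
rewrite exp_0; ring.
Qed.

Lemma exp_decay W W' c a b :
  (forall s, a <= s <= b -> derivable_pt_lim W s (W' s)) ->
  (forall s, a <= s <= b -> W' s <= - c * W s) ->
  forall s, a <= s <= b -> W s <= W a * exp (- c * (s - a)).
Proof.
intros Hd Hb s Hs.
assert (Hw : W s * exp (c * (s - a)) <= W a * exp (c * (a - a))).
{ apply (nonincreasing_of_deriv (fun r => W r * exp (c * (r - a)))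
           (fun r => (W' r + c * W r) * exp (c * (r - a)))); [lra | |].
  - intros r Hr. apply exp_weight_deriv, Hd. lra.
  - intros r Hr. pose proof (Hb r ltac:(lra)). pose proof (exp_pos (c * (r - a))). nra. }
replace (c * (a - a)) with 0 in Hw by ring. rewrite exp_0, Rmult_1_r in Hw.
rewrite (exp_weight_cancel (W s) c (s - a)).
apply Rmult_le_compat_r; [apply Rlt_le, exp_pos | exact Hw].
Qed.

Lemma affine_growth E E' al be a :
  0 < al -> E a = 0 ->
  (forall s, a <= s -> derivable_pt_lim E s (E' s)) ->
  (forall s, a <= s -> E' s <= al * E s + be) ->
  forall s, a <= s -> E s <= be / al * (exp (al * (s - a)) - 1).
Proof.
intros Hal Ha Hd Hb s Hs.
assert (H : E s + be / al <= (E a + be / al) * exp (- - al * (s - a))).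
{ apply (exp_decay (fun r => E r + be / al) (fun r => E' r + 0) (- al) a s); [| |lra].
  - intros r Hr. apply derivable_pt_lim_plus; [apply Hd; lra | apply derivable_pt_lim_const].
  - intros r Hr. pose proof (Hb r ltac:(lra)).
    replace (- - al * (E r + be / al)) with (al * E r + be) by (field; lra). lra. }
rewrite Ha, Ropp_involutive in H. lra.
Qed.

Lemma weighted_positivity z dz c a s : a < s -> 0 <= z a ->
  (forall r, a <= r <= s -> derivable_pt_lim z r (dz r)) ->
  (forall r, a < r < s -> 0 < dz r + c * z r) -> 0 < z s.
Proof.
intros Has Ha Hd Hp.
assert (H : z a * exp (c * (a - a)) < z s * exp (c * (s - a))).
{ apply (increasing_of_deriv (fun r => z r * exp (c * (r - a)))
           (fun r => (dz r + c * z r) * exp (c * (r - a)))); [lra | |].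
  - intros r Hr. apply exp_weight_deriv, Hd; lra.
  - intros r Hr. apply Rmult_lt_0_compat; [apply Hp; lra | apply exp_pos]. }
replace (c * (a - a)) with 0 in H by ring. rewrite exp_0 in H.
pose proof (exp_pos (c * (s - a))). nra.
Qed.

Lemma nonneg_at_right_end z a b : a < b -> continuity_pt z b ->
  (forall r, a < r < b -> 0 < z r) -> 0 <= z b.
Proof.
intros Hab Hc Hp. destruct (Rle_dec 0 (z b)) as [|Hneg]; [auto|exfalso].
destruct (Hc (- z b)) as [del [Hdel Hc2]]; [lra|].
set (r := b - Rmin del (b - a) / 2).
assert (Hm1 : 0 < Rmin del (b - a)) by (apply Rmin_glb_lt; lra).
assert (Hm2 : Rmin del (b - a) <= del) by apply Rmin_l.
assert (Hm3 : Rmin del (b - a) <= b - a) by apply Rmin_r.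
assert (Hr : a < r < b) by (unfold r; lra).
assert (Hdist : R_dist r b < del) by (unfold R_dist; rewrite Rabs_left by lra; unfold r; lra).
assert (Hz : R_dist (z r) (z b) < - z b).
{ apply Hc2. split; [split; [exact I | lra] | exact Hdist]. }
unfold R_dist in Hz. pose proof (Rle_abs (z r - z b)). pose proof (Hp r Hr). lra.
Qed.

(* The dynamic variable of the event generator stays nonnegative while the
   triggering quantity z + theta G is positive: with z' = - lam z + G,
   for theta > 0 one has z' + (lam + 1/theta) z = (z + theta G) / theta. *)
Lemma nonneg_while_untriggered z G lam theta a b :
  0 <= theta -> 0 <= z a -> a <= b ->
  (forall r, derivable_pt_lim z r (- lam * z r + G r)) ->
  (forall s, a < s < b -> 0 < z s + theta * G s) ->
  forall s, a <= s <= b -> 0 <= z s.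
Proof.
intros Ht Ha Hab Hd Hp s Hs.
destruct (Req_dec s a) as [->|Hsa]; [lra|].
destruct (Req_dec theta 0) as [Ht0|Ht0].
- subst theta. destruct (Req_dec s b) as [->|Hsb].
  + apply (nonneg_at_right_end z a b); [lra | |].
    * apply derivable_continuous_pt. exists (- lam * z b + G b). apply Hd.
    * intros r Hr. pose proof (Hp r Hr). lra.
  + pose proof (Hp s ltac:(lra)). lra.
- apply Rlt_le, (weighted_positivity z (fun r => - lam * z r + G r) (lam + / theta) a s);
    [lra | auto | intros; apply Hd |].
  intros r Hr.
  replace (- lam * z r + G r + (lam + / theta) * z r) with ((z r + theta * G r) / theta)
    by (field; lra).
  apply Rdiv_lt_0_compat; [apply Hp; lra | lra].
Qed.

(** * The closed loop between two executions *)

Definition held_flow (n m : nat) (A B K : mat) (xi : vec) (z : R -> vec) : Prop :=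
  forall s, vec_deriv n z s (vadd (mv n A (z s)) (mv m B (mv n K xi))).

Definition eta_input (n m : nat) (P Q B K : mat) (sigma : R) (xi v : vec) : R :=
  sigma * quad n Q v - 2 * dot n v (mv n P (mv m B (mv n K (vsub xi v)))).

Lemma trig_eta_input n m P Q B K sigma theta xi zt et :
  trig n m P Q B K sigma theta xi zt et = et + theta * eta_input n m P Q B K sigma xi zt.
Proof. reflexivity. Qed.

Lemma eta_deriv_input n m P Q B K lam sigma xi (z : R -> vec) zeta s :
  derivable_pt_lim zeta s
    (- lam * zeta s + sigma * quad n Q (z s)
     - 2 * dot n (z s) (mv n P (mv m B (mv n K (vsub xi (z s)))))) ->
  derivable_pt_lim zeta s (- lam * zeta s + eta_input n m P Q B K sigma xi (z s)).
Proof.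
intros H. unfold eta_input.
rewrite <- Rplus_minus_assoc in H. exact H.
Qed.

Lemma mv_closed_loop n m A B K v i :
  mv n (madd A (mm m B K)) v i = mv n A v i + mv m B (mv n K v) i.
Proof.
rewrite <- mv_mm. unfold mv, madd. rewrite <- sumR_plus. apply sumR_ext; intros; ring.
Qed.

Lemma lyapunov_quad n F P Q v : sym n P ->
  (forall i j, (i < n)%nat -> (j < n)%nat ->
     mm n (trans F) P i j + mm n P F i j = - Q i j) ->
  2 * dot n v (mv n P (mv n F v)) = - quad n Q v.
Proof.
intros HP HL. unfold quad.
assert (E : forall i, (i < n)%nat ->
          mv n Q v i = (-1) * mv n (trans F) (mv n P v) i + (-1) * mv n P (mv n F v) i).
{ intros i Hi. rewrite <- !mv_mm. unfold mv. rewrite <- !sumR_scal, <- sumR_plus.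
  apply sumR_ext; intros j Hj. rewrite <- (Ropp_involutive (Q i j)), <- HL by auto. ring. }
rewrite (dot_ext n v (mv n Q v) v (fun i => _ * mv n (trans F) (mv n P v) i + _ * _))
  by (intros j Hj; split; [reflexivity | apply E; auto]).
rewrite dot_lin2, dot_trans, (dot_sym_mv n P v (mv n F v)) by auto.
rewrite (dot_comm n (mv n P v) (mv n F v)). ring.
Qed.

Lemma lyapunov_deriv n m (A B K P Q : mat) lam sigma xi z zeta s :
  sym n P ->
  (forall i j, (i < n)%nat -> (j < n)%nat ->
     mm n (trans (madd A (mm m B K))) P i j + mm n P (madd A (mm m B K)) i j = - Q i j) ->
  held_flow n m A B K xi z ->
  derivable_pt_lim zeta s (- lam * zeta s + eta_input n m P Q B K sigma xi (z s)) ->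
  derivable_pt_lim (fun r => quad n P (z r) + zeta r) s
    (- (1 - sigma) * quad n Q (z s) - lam * zeta s).
Proof.
intros HP HL Hz Hzeta.
set (F := madd A (mm m B K)). set (e := vsub xi (z s)).
set (bb := dot n (z s) (mv n P (mv m B (mv n K e)))).
(* the flow is F z + B K e, so V' = - x^T Q x + 2 x^T P B K e *)
assert (Hid : 2 * dot n (z s) (mv n P (vadd (mv n A (z s)) (mv m B (mv n K xi))))
              = - quad n Q (z s) + 2 * bb).
{ rewrite (dot_ext n (z s) (mv n P (vadd (mv n A (z s)) (mv m B (mv n K xi))))
      (z s) (fun i => 1 * mv n P (mv n F (z s)) i + 1 * mv n P (mv m B (mv n K e)) i)).
  - rewrite dot_lin2, <- (lyapunov_quad n F P Q (z s) HP HL). unfold bb. ring.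
  - intros j Hj. split; [reflexivity|]. rewrite <- mv_lin. apply mv_ext. intros l Hl.
    unfold vadd, F. rewrite mv_closed_loop.
    rewrite (mv_ext m B (mv n K xi) (fun q => 1 * mv n K (z s) q + 1 * mv n K e q)).
    + rewrite mv_lin. ring.
    + intros q _. rewrite <- mv_lin. apply mv_ext. intros; unfold e, vsub; ring. }
pose proof (derivable_pt_lim_plus _ _ s _ _ (quad_deriv n P z s _ HP (Hz s)) Hzeta) as H.
rewrite Hid in H. unfold eta_input in H. fold e bb in H.
replace (- (1 - sigma) * quad n Q (z s) - lam * zeta s) with
  (- quad n Q (z s) + 2 * bb + (- lam * zeta s + (sigma * quad n Q (z s) - 2 * bb))) by ring.
exact H.
Qed.

(** * A uniform lower bound on the inter-execution times *)

Lemma error_growth n m (A B K : mat) CA CBK xi z a :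
  lin_bound n n (mv n A) CA ->
  lin_bound n n (fun v => mv m B (mv n K v)) CBK ->
  z a = xi -> held_flow n m A B K xi z ->
  forall r, a <= r ->
    nrm n (vsub xi (z r))
    <= (4 * CA + 2 * CBK) / (1 + 4 * CA) * (exp ((1 + 4 * CA) * (r - a)) - 1) * nrm n xi.
Proof.
intros [HCA HA] [HCBK HBK] Hza Hz.
intros r Hr.
replace ((4 * CA + 2 * CBK) / (1 + 4 * CA) * (exp ((1 + 4 * CA) * (r - a)) - 1) * nrm n xi)
  with ((4 * CA + 2 * CBK) * nrm n xi / (1 + 4 * CA) * (exp ((1 + 4 * CA) * (r - a)) - 1))
  by (field; lra).
revert r Hr.
set (de := fun r k => - vadd (mv n A (z r)) (mv m B (mv n K xi)) k).
apply (affine_growth (fun r => nrm n (vsub xi (z r)))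
         (fun r => 2 * dot n (vsub xi (z r)) (de r))); [lra | | |].
- rewrite Hza. rewrite <- (nrm_zero n). apply (dot_ext n); intros; unfold vsub; lra.
- intros r _. unfold nrm.
  replace (2 * dot n (vsub xi (z r)) (de r))
    with (dot n (de r) (vsub xi (z r)) + dot n (vsub xi (z r)) (de r))
    by (rewrite dot_comm; ring).
  assert (Hde : vec_deriv n (fun q => vsub xi (z q)) r (de r)).
  { intros k Hk. unfold vsub, de.
    replace (- vadd (mv n A (z r)) (mv m B (mv n K xi)) k)
      with (0 - vadd (mv n A (z r)) (mv m B (mv n K xi)) k) by ring.
    apply (derivable_pt_lim_minus (fun _ => xi k)); [apply derivable_pt_lim_const | apply Hz; auto]. }
  apply dot_deriv; exact Hde.
- intros r _. set (e := vsub xi (z r)).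
  pose proof (young n e (de r) 1 Rlt_0_1) as Hy.
  assert (Hd : nrm n (de r) <= 2 * nrm n (mv n A (z r)) + 2 * nrm n (mv m B (mv n K xi))).
  { rewrite <- (nrm_opp n (mv n A (z r))), <- (nrm_opp n (mv m B (mv n K xi))).
    apply nrm_add. intros j _. unfold de, vadd. ring. }
  assert (Hzr : nrm n (z r) <= 2 * nrm n xi + 2 * nrm n e).
  { rewrite <- (nrm_opp n e). apply nrm_add. intros j _. unfold e, vsub. ring. }
  pose proof (HA (z r)). pose proof (HBK xi).
  assert (CA * nrm n (z r) <= CA * (2 * nrm n xi + 2 * nrm n e))
    by (apply Rmult_le_compat_l; auto).
  replace (nrm n (de r) / 1) with (nrm n (de r)) in Hy by field. lra.
Qed.

Lemma eta_input_lower n m (P Q B K : mat) sigma muQ CPBK xi v :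
  0 < sigma -> 0 < muQ ->
  (forall u, muQ * nrm n u <= quad n Q u) ->
  lin_bound n n (fun u => mv n P (mv m B (mv n K u))) CPBK ->
  sigma * muQ / 4 * nrm n xi
  - (sigma * muQ / 2 + 2 * CPBK / (sigma * muQ)) * nrm n (vsub xi v)
  <= eta_input n m P Q B K sigma xi v.
Proof.
intros Hsig HmuQ HcQ [HCPBK HPBK]. unfold eta_input.
set (d := sigma * muQ / 2). assert (Hd : 0 < d) by (unfold d; nra).
set (e := vsub xi v). set (w := mv n P (mv m B (mv n K e))).
pose proof (young n v w d Hd) as Hy.
assert (Hw : nrm n w / d <= 2 * CPBK / (sigma * muQ) * nrm n e).
{ replace (2 * CPBK / (sigma * muQ)) with (CPBK / d) by (unfold d; field; lra).
  unfold Rdiv. rewrite (Rmult_comm CPBK), Rmult_assoc, (Rmult_comm (/ d)).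
  apply Rmult_le_compat_r; [apply Rlt_le, Rinv_0_lt_compat; lra | apply HPBK]. }
assert (HQ : sigma * (muQ * nrm n v) <= sigma * quad n Q v)
  by (apply Rmult_le_compat_l; [lra | apply HcQ]).
assert (Hxi : nrm n xi <= 2 * nrm n v + 2 * nrm n e)
  by (apply nrm_add; intros j _; unfold e, vsub; ring).
assert (d / 2 * nrm n xi <= d / 2 * (2 * nrm n v + 2 * nrm n e))
  by (apply Rmult_le_compat_l; lra).
unfold d in *. lra.
Qed.

Lemma small_time_growth al be eps : 0 < al -> 0 <= be -> 0 < eps ->
  exists tau, 0 < tau /\
    forall h, 0 <= h <= tau -> be / al * (exp (al * h) - 1) <= eps.
Proof.
intros Hal Hbe Heps.
set (y := 1 + eps * al / (be + 1)).
assert (Hy : 1 < y) by (unfold y; assert (0 < eps * al / (be + 1)) by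
                          (apply Rdiv_lt_0_compat; nra); lra).
exists (ln y / al). split.
{ apply Rdiv_lt_0_compat; [rewrite <- ln_1; apply ln_increasing|]; lra. }
intros h Hh.
assert (Hexp : exp (al * h) <= y).
{ rewrite <- (exp_ln y) by lra. apply exp_monotone.
  assert (al * h <= al * (ln y / al)) by (apply Rmult_le_compat_l; lra).
  replace (al * (ln y / al)) with (ln y) in H by (field; lra). lra. }
assert (be / al * (exp (al * h) - 1) <= be / al * (y - 1)).
{ apply Rmult_le_compat_l; [apply Rmult_le_pos; [|apply Rlt_le, Rinv_0_lt_compat]|]; lra. }
assert (be / al * (y - 1) = eps * (be / (be + 1))) by (unfold y; field; lra).
assert (be / (be + 1) <= 1).
{ apply (Rmult_le_reg_r (be + 1)); [lra|].
  replace (be / (be + 1) * (be + 1)) with be by (field; lra). lra. }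
assert (eps * (be / (be + 1)) <= eps * 1) by (apply Rmult_le_compat_l; lra).
lra.
Qed.

Lemma eta_input_dwell n m (A B K P Q : mat) sigma :
  sym n Q -> pos_def n Q -> 0 < sigma ->
  exists tau, 0 < tau /\ forall xi z a, vnonzero n xi -> z a = xi ->
    held_flow n m A B K xi z ->
    forall s, a <= s <= a + tau -> 0 < eta_input n m P Q B K sigma xi (z s).
Proof.
intros HQs HQp Hsig.
destruct (coercive n Q HQs HQp) as [muQ [HmuQ HcQ]].
destruct (mv_bound n n A) as [CA HA]. destruct (mv_bound n m K) as [CK HK].
destruct (mv_bound m n B) as [CB HB]. destruct (mv_bound n n P) as [CP HP].
pose proof (lin_bound_comp n m n _ _ CK CB HK HB) as HBK.
pose proof (lin_bound_comp n n n _ _ (CB * CK) CP HBK HP) as HPBK.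
set (L := sigma * muQ / 2 + 2 * (CP * (CB * CK)) / (sigma * muQ)).
assert (HL : 0 < L).
{ assert (0 <= 2 * (CP * (CB * CK)) / (sigma * muQ)) by
    (apply Rmult_le_pos; [destruct HPBK; lra | apply Rlt_le, Rinv_0_lt_compat; nra]).
  unfold L. nra. }
(* tau is chosen so that the error stays below |xi|^2 sigma muQ / (8 L) *)
destruct (small_time_growth (1 + 4 * CA) (4 * CA + 2 * (CB * CK)) (sigma * muQ / (8 * L)))
  as [tau [Htau Hsmall]]; [destruct HA | destruct HA, HBK | apply Rdiv_lt_0_compat |]; try nra.
exists tau. split; [exact Htau|]. intros xi z a Hxi Hza Hz s Hs.
pose proof (nrm_pos n xi Hxi) as HX.
assert (Hsm : nrm n (vsub xi (z s)) <= sigma * muQ / (8 * L) * nrm n xi).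
{ eapply Rle_trans; [apply (error_growth n m A B K CA (CB * CK) xi z a); auto; lra|].
  apply Rmult_le_compat_r; [lra | apply Hsmall; lra]. }
pose proof (eta_input_lower n m P Q B K sigma muQ _ xi (z s) Hsig HmuQ HcQ HPBK) as Hg.
fold L in Hg.
assert (L * nrm n (vsub xi (z s)) <= sigma * muQ / 8 * nrm n xi).
{ replace (sigma * muQ / 8 * nrm n xi) with (L * (sigma * muQ / (8 * L) * nrm n xi))
    by (field; lra).
  apply Rmult_le_compat_l; lra. }
assert (0 < sigma * muQ / 8 * nrm n xi) by (apply Rmult_lt_0_compat; nra).
lra.
Qed.

(** * Executions of the dynamic event generator *)

Lemma inI_pred Ifin i : inI Ifin (S i) -> inI Ifin i.
Proof. destruct Ifin; simpl; auto. lia. Qed.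

Lemma inI_0 Ifin : inI Ifin 0.
Proof. destruct Ifin; simpl; auto. lia. Qed.

Section Execution.

Variables (n m : nat) (A B K P Q : mat) (kappa lam sigma theta : R).
Hypothesis HP : sym n P.
Hypothesis HL : forall i j, (i < n)%nat -> (j < n)%nat ->
  mm n (trans (madd A (mm m B K))) P i j + mm n P (madd A (mm m B K)) i j = - Q i j.
Hypothesis Hkappa : forall v, kappa * quad n P v <= quad n Q v.
Hypothesis HV : forall v, 0 <= quad n P v.
Hypothesis Hsigma : sigma < 1.
Hypothesis Htheta : 0 <= theta.

Lemma untriggered_decay c xi z zeta a b :
  c <= (1 - sigma) * kappa -> c <= lam ->
  held_flow n m A B K xi z ->
  (forall r, derivable_pt_lim zeta r (- lam * zeta r + eta_input n m P Q B K sigma xi (z r))) ->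
  0 <= zeta a -> a <= b ->
  (forall s, a < s < b -> 0 < zeta s + theta * eta_input n m P Q B K sigma xi (z s)) ->
  forall s, a <= s <= b -> 0 <= zeta s /\
    quad n P (z s) + zeta s <= (quad n P (z a) + zeta a) * exp (- c * (s - a)).
Proof.
intros Hc1 Hc2 Hz Hzeta Ha Hab Htr.
assert (Hnn : forall s, a <= s <= b -> 0 <= zeta s)
  by (apply (nonneg_while_untriggered zeta (fun r => eta_input n m P Q B K sigma xi (z r))
                                 lam theta a b); auto).
intros s Hs. split; [apply Hnn; auto|].
apply (exp_decay (fun r => quad n P (z r) + zeta r)
         (fun r => - (1 - sigma) * quad n Q (z r) - lam * zeta r) c a b); auto.
- intros r _. apply (lyapunov_deriv n m A B K P Q lam sigma xi); auto.
- intros r Hr. pose proof (Hnn r Hr). pose proof (Hkappa (z r)). pose proof (HV (z r)).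
  assert (0 <= ((1 - sigma) * kappa - c) * quad n P (z r)) by (apply Rmult_le_pos; lra).
  assert (0 <= (lam - c) * zeta r) by (apply Rmult_le_pos; lra).
  assert ((1 - sigma) * (kappa * quad n P (z r)) <= (1 - sigma) * quad n Q (z r))
    by (apply Rmult_le_compat_l; lra).
  lra.
Qed.

Variables (tau : R) (x : R -> vec) (eta : R -> R) (t : nat -> R) (Ifin : option nat)
          (z : nat -> R -> vec) (zeta : nat -> R -> R).
Hypothesis Htau : 0 < tau.
Hypothesis Hexec : is_execution n m A B K P Q lam sigma theta x eta t Ifin z zeta.
Hypothesis Hnonzero : forall i, inI Ifin i -> vnonzero n (x (t i)).
(* the conclusion of eta_input_dwell *)
Hypothesis Hdwell : forall xi w a, vnonzero n xi -> w a = xi -> held_flow n m A B K xi w ->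
  forall s, a <= s <= a + tau -> 0 < eta_input n m P Q B K sigma xi (w s).

Local Notation W s := (quad n P (x s) + eta s).

Lemma exec_flow i : inI Ifin i ->
  z i (t i) = x (t i) /\ zeta i (t i) = eta (t i) /\
  held_flow n m A B K (x (t i)) (z i) /\
  forall s, derivable_pt_lim (zeta i) s
              (- lam * zeta i s + eta_input n m P Q B K sigma (x (t i)) (z i s)).
Proof.
intros Hi. destruct Hexec as [_ [_ [Hflow _]]].
destruct (Hflow i Hi) as [Hz0 [Hzeta0 [Hz Hzeta]]].
repeat split; auto. intros s. apply eta_deriv_input, Hzeta.
Qed.

(* No execution happens within tau of the previous one: until then the
   eta-input is positive, hence so are eta and the triggering quantity. *)
Lemma exec_dwell i : inI Ifin i -> inI Ifin (S i) -> 0 <= eta (t i) ->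
  t i + tau <= t (S i).
Proof.
intros Hi HSi He.
destruct (exec_flow i Hi) as [Hz0 [Hzeta0 [Hz Hzeta]]].
destruct Hexec as [_ [_ [_ [Hmid _]]]]. destruct (Hmid i Hi HSi) as [[_ Hglb] _].
pose proof (Hdwell (x (t i)) (z i) (t i) (Hnonzero i Hi) Hz0 Hz) as Hg.
apply Hglb. intros s [Hs1 Hs2]. rewrite trig_eta_input in Hs2.
destruct (Rle_dec (t i + tau) s) as [|Hlt]; [auto|exfalso].
assert (0 < zeta i s).
{ apply (weighted_positivity (zeta i)
           (fun r => - lam * zeta i r + eta_input n m P Q B K sigma (x (t i)) (z i r)) lam (t i) s); [lra | rewrite Hzeta0; auto | |].
  - intros r _. apply Hzeta.
  - intros r Hr. replace (_ + lam * zeta i r) with (eta_input n m P Q B K sigma (x (t i)) (z i r))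
      by ring. apply Hg. lra. }
assert (0 < eta_input n m P Q B K sigma (x (t i)) (z i s)) by (apply Hg; lra).
assert (0 <= theta * eta_input n m P Q B K sigma (x (t i)) (z i s)) by (apply Rmult_le_pos; lra).
lra.
Qed.

Lemma exec_interval_decay c i :
  c <= (1 - sigma) * kappa -> c <= lam ->
  inI Ifin i -> 0 <= eta (t i) ->
  forall s, t i <= s -> (inI Ifin (S i) -> s <= t (S i)) ->
    0 <= eta s /\ W s <= W (t i) * exp (- c * (s - t i)).
Proof.
intros Hc1 Hc2 Hi He s Hs HsS.
destruct (exec_flow i Hi) as [Hz0 [Hzeta0 [Hz Hzeta]]].
rewrite <- Hz0, <- Hzeta0.
destruct Hexec as [_ [_ [_ [Hmid Hlast]]]].
destruct (classic (inI Ifin (S i))) as [HSi|HSi].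
- (* before the next execution the triggering set has not been reached *)
  destruct (Hmid i Hi HSi) as [[Hlow Hglb] Hagree].
  destruct (Hagree s (conj Hs (HsS HSi))) as [-> ->].
  apply (untriggered_decay c (x (t i)) (z i) (zeta i) (t i) (t (S i)));
    auto; [rewrite Hzeta0; auto | apply Hglb; intros r [Hr _]; lra |].
  intros r Hr. destruct (Rlt_dec 0 (zeta i r + theta * eta_input n m P Q B K sigma (x (t i)) (z i r)))
    as [|Hn]; [auto|exfalso].
  assert (t (S i) <= r) by (apply Hlow; split; [lra | rewrite trig_eta_input; lra]). lra.
- (* after the last execution the triggering set is never reached *)
  destruct (Hlast i Hi HSi) as [Hnever Hagree].
  destruct (Hagree s Hs) as [-> ->].
  apply (untriggered_decay c (x (t i)) (z i) (zeta i) (t i) s);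
    auto; [rewrite Hzeta0; auto | | lra].
  intros r Hr. pose proof (Hnever r ltac:(lra)) as Hn. rewrite trig_eta_input in Hn. lra.
Qed.

Lemma exec_invariant c :
  c <= (1 - sigma) * kappa -> c <= lam ->
  forall i, inI Ifin i ->
    0 <= eta (t i) /\ W (t i) <= W 0 * exp (- c * t i) /\ INR i * tau <= t i.
Proof.
intros Hc1 Hc2. destruct Hexec as [Ht0 [He0 _]].
induction i as [|i IH]; intros Hi.
- rewrite Ht0, He0. simpl. replace (- c * 0) with 0 by ring. rewrite exp_0. lra.
- destruct (IH (inI_pred _ _ Hi)) as [He [HWi Hti]].
  pose proof (exec_dwell i (inI_pred _ _ Hi) Hi He) as Hd.
  destruct (exec_interval_decay c i Hc1 Hc2 (inI_pred _ _ Hi) He (t (S i)) ltac:(lra)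
              (fun _ => Rle_refl _)) as [He' HW'].
  repeat split; [exact He' | | rewrite S_INR, Rmult_plus_distr_r, Rmult_1_l; lra].
  assert (W (t i) * exp (- c * (t (S i) - t i))
          <= W 0 * exp (- c * t i) * exp (- c * (t (S i) - t i)))
    by (apply Rmult_le_compat_r; [apply Rlt_le, exp_pos | auto]).
  rewrite Rmult_assoc, <- exp_plus in H.
  replace (- c * t i + - c * (t (S i) - t i)) with (- c * t (S i)) in H by ring. lra.
Qed.

Lemma exec_cover : (forall i, inI Ifin i -> INR i * tau <= t i) ->
  forall s, 0 <= s -> exists i, inI Ifin i /\ t i <= s /\ (inI Ifin (S i) -> s <= t (S i)).
Proof.
intros Hspaced s Hs0. destruct Hexec as [Ht0 _].
assert (Hcl : forall k, (exists i, inI Ifin i /\ t i <= s /\ (inI Ifin (S i) -> s <= t (S i)))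
                        \/ (inI Ifin k /\ t k <= s)).
{ induction k as [|k IH]; [right; split; [apply inI_0 | lra]|].
  destruct IH as [IH|[Hk1 Hk2]]; [left; auto|].
  destruct (classic (inI Ifin (S k) /\ t (S k) <= s)) as [Hy|Hy]; [right; auto|].
  left. exists k. repeat split; auto. intros HSk.
  destruct (Rle_dec s (t (S k))) as [|Hn]; [auto|]. exfalso. apply Hy. split; [auto | lra]. }
destruct (INR_unbounded (s / tau)) as [k Hk].
destruct (Hcl k) as [|[Hk1 Hk2]]; [auto | exfalso].
pose proof (Hspaced k Hk1).
apply (Rmult_lt_compat_r tau) in Hk; [|auto].
replace (s / tau * tau) with s in Hk by (field; lra). lra.
Qed.

Lemma exec_decay c :
  c <= (1 - sigma) * kappa -> c <= lam ->
  forall s, 0 <= s -> 0 <= eta s /\ W s <= W 0 * exp (- c * s).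
Proof.
intros Hc1 Hc2 s Hs.
pose proof (exec_invariant c Hc1 Hc2) as Hinv.
destruct (exec_cover (fun i Hi => proj2 (proj2 (Hinv i Hi))) s Hs) as [i [Hi [Hts Hst]]].
destruct (Hinv i Hi) as [He [HWi _]].
destruct (exec_interval_decay c i Hc1 Hc2 Hi He s Hts Hst) as [Hes HWs].
split; [exact Hes|].
assert (W (t i) * exp (- c * (s - t i)) <= W 0 * exp (- c * t i) * exp (- c * (s - t i)))
  by (apply Rmult_le_compat_r; [apply Rlt_le, exp_pos | auto]).
rewrite Rmult_assoc, <- exp_plus in H.
replace (- c * t i + - c * (s - t i)) with (- c * s) in H by ring. lra.
Qed.

Lemma exec_spacing : forall i, inI Ifin i -> inI Ifin (S i) -> tau <= t (S i) - t i.
Proof.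
intros i Hi HSi.
destruct (exec_invariant (Rmin ((1 - sigma) * kappa) lam) (Rmin_l _ _) (Rmin_r _ _) i Hi)
  as [He _].
pose proof (exec_dwell i Hi HSi He). lra.
Qed.

End Execution.

(** * Convergence from exponential bounds *)

Lemma exp_small M c d : 0 < c -> 0 <= M -> 0 < d ->
  exists T, 0 <= T /\ forall s, T <= s -> M * exp (- c * s) < d.
Proof.
intros Hc HM Hd.
assert (HT : 0 <= M / (d * c)) by (apply Rmult_le_pos; [|apply Rlt_le, Rinv_0_lt_compat]; nra).
exists (M / (d * c)). split; [exact HT|]. intros s Hs.
(* exp (c s) >= 1 + c s > c s >= M / d *)
pose proof (exp_ineq1_le (c * s)).
assert (HMs : M <= d * (c * s)).
{ apply (Rmult_le_compat_l (d * c)) in Hs; [|nra].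
  replace (d * c * (M / (d * c))) with M in Hs by (field; lra). lra. }
replace (- c * s) with (- (c * s)) by ring. rewrite exp_Ropp.
pose proof (exp_pos (c * s)).
apply (Rmult_lt_reg_r (exp (c * s))); [lra|].
replace (M * / exp (c * s) * exp (c * s)) with M by (field; lra).
assert (d * (c * s) < d * exp (c * s)) by (apply Rmult_lt_compat_l; lra). lra.
Qed.

Lemma tends_of_exp_bound f M c : 0 < c -> 0 <= M ->
  (forall s, 0 <= s -> Rabs (f s) <= M * exp (- c * s)) -> tends_to_0 f.
Proof.
intros Hc HM H eps Heps. destruct (exp_small M c eps Hc HM Heps) as [T [HT HT2]].
exists T. intros s Hs. pose proof (H s ltac:(lra)). pose proof (HT2 s Hs). lra.
Qed.

Lemma tends_of_sq_exp_bound f M c : 0 < c -> 0 <= M ->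
  (forall s, 0 <= s -> f s ^ 2 <= M * exp (- c * s)) -> tends_to_0 f.
Proof.
intros Hc HM H eps Heps.
destruct (exp_small M c (eps * eps) Hc HM ltac:(nra)) as [T [HT HT2]].
exists T. intros s Hs. pose proof (H s ltac:(lra)). pose proof (HT2 s Hs).
assert (Habs : f s ^ 2 = Rabs (f s) * Rabs (f s))
  by (rewrite <- Rabs_mult, Rabs_right; [ring | nra]).
destruct (Rlt_dec (Rabs (f s)) eps) as [|Hn]; [auto | nra].
Qed.

Lemma coords_tend_to_0 n P (x : R -> vec) muP V0 c : 0 < muP -> 0 < c -> 0 <= V0 ->
  (forall v, muP * nrm n v <= quad n P v) ->
  (forall s, 0 <= s -> quad n P (x s) <= V0 * exp (- c * s)) ->
  forall k, (k < n)%nat -> tends_to_0 (fun s => x s k).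
Proof.
intros HmuP Hc HV0 HcP Hdec k Hk.
apply (tends_of_sq_exp_bound _ (V0 / muP) c Hc).
{ apply Rmult_le_pos; [auto | apply Rlt_le, Rinv_0_lt_compat; auto]. }
intros s Hs. pose proof (Hdec s Hs). pose proof (nrm_term n (x s) k Hk). pose proof (HcP (x s)).
apply (Rmult_le_reg_l muP); [auto|].
replace (muP * (V0 / muP * exp (- c * s))) with (V0 * exp (- c * s)) by (field; lra).
assert (muP * x s k ^ 2 <= muP * nrm n (x s)) by (apply Rmult_le_compat_l; lra). lra.
Qed.

(* The Hurwitz hypothesis only enters through the Lyapunov equation. *)
Theorem theorem2 (n m : nat) (A B K P Q : mat) (kappa : R) :
  hurwitz n (madd A (mm m B K)) ->
  sym n P -> pos_def n P -> sym n Q -> pos_def n Q ->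
  (forall i j, (i < n)%nat -> (j < n)%nat ->
     mm n (trans (madd A (mm m B K))) P i j + mm n P (madd A (mm m B K)) i j
     = - Q i j) ->
  0 < kappa ->
  (forall v, kappa * quad n P v <= quad n Q v) ->
  forall lam sigma theta : R,
    0 < lam -> 0 < sigma < 1 -> 0 <= theta ->
    exists tau, 0 < tau /\
      forall (x : R -> vec) (eta : R -> R) (t : nat -> R) (Ifin : option nat)
             (z : nat -> R -> vec) (zeta : nat -> R -> R),
        is_execution n m A B K P Q lam sigma theta x eta t Ifin z zeta ->
        (forall i, inI Ifin i -> vnonzero n (x (t i))) ->
        (forall i, inI Ifin i -> inI Ifin (S i) -> tau <= t (S i) - t i) /\
        (forall k, (k < n)%nat -> tends_to_0 (fun s => x s k)) /\
        tends_to_0 eta /\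
        (lam = (1 - sigma) * kappa ->
         forall s, 0 <= s ->
           quad n P (x s) <= quad n P (x 0) * exp ((sigma - 1) * kappa * s)).
Proof.
intros _ HPs HPp HQs HQp HL Hkappa HkP lam sigma theta Hlam Hsig Htheta.
destruct (eta_input_dwell n m A B K P Q sigma HQs HQp (proj1 Hsig)) as [tau [Htau Hdw]].
exists tau. split; [exact Htau|]. intros x eta t Ifin z zeta Hex Hnz.
destruct (coercive n P HPs HPp) as [muP [HmuP HcP]].
assert (HV : forall v, 0 <= quad n P v)
  by (intros v; pose proof (HcP v); pose proof (nrm_nonneg n v); nra).
assert (HW0 : quad n P (x 0) + eta 0 = quad n P (x 0)) by (destruct Hex as [_ [-> _]]; ring).
pose proof (fun c Hc1 Hc2 => exec_decay n m A B K P Q kappa lam sigma theta HPs HL HkP HV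
              (proj2 Hsig) Htheta tau x eta t Ifin z zeta Htau Hex Hnz Hdw c Hc1 Hc2) as Hdec.
set (c := Rmin ((1 - sigma) * kappa) lam). assert (Hc : 0 < c) by (apply Rmin_glb_lt; nra).
pose proof (HV (x 0)) as HV0.
repeat split.
- exact (exec_spacing n m A B K P Q kappa lam sigma theta HPs HL HkP HV (proj2 Hsig) Htheta
           tau x eta t Ifin z zeta Htau Hex Hnz Hdw).
- apply (coords_tend_to_0 n P x muP (quad n P (x 0)) c); auto. intros s Hs.
  destruct (Hdec c (Rmin_l _ _) (Rmin_r _ _) s Hs) as [He HW]. rewrite HW0 in HW. lra.
- apply (tends_of_exp_bound _ (quad n P (x 0)) c Hc HV0). intros s Hs.
  destruct (Hdec c (Rmin_l _ _) (Rmin_r _ _) s Hs) as [He HW]. rewrite HW0 in HW.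
  rewrite Rabs_right by lra. pose proof (HV (x s)). lra.
- intros Hl s Hs. destruct (Hdec lam ltac:(lra) (Rle_refl _) s Hs) as [He HW].
  rewrite HW0 in HW. replace ((sigma - 1) * kappa * s) with (- lam * s) by (rewrite Hl; ring).
  lra.
Qed.
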